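(* Let $\phi:\mathbb{R}^{K+J}\times[K+J]\to\mathbb{R}_{\ge 0}$ be such that $\theta\mapsto\phi(\theta,i)$ is continuous on $\mathbb{R}^{K+J}$ for every $i\in[K+J]$, and suppose $\phi$ is symmetric with respect to its last $J$ inputs. Then for every $y\in[K]$ and every $m\in[K]^J$, the map $\theta\mapsto\widetilde{\ell}_\phi(\theta,y,m)$ is continuous on $\mathbb{R}^{K+J}$.
   Context: Fix integers $K\ge 2$ (number of classes) and $J\ge 1$ (number of experts); $[n]=\{1,\dots,n\}$. For a finite index set $I$ and reals $(a_i)_{i\in I}$, $\operatorname{argmax}_{i\in I}a_i$ denotes a single maximizer chosen by a fixed deterministic tie-breaking rule. For $y\in[K]$ and $m=(m_1,\dots,m_J)\in[K]^J$, let $[m=y]=\{j\in[J]: m_j=y\}$. Given a multiclass loss $\phi:\mathbb{R}^{K+J}\times[K+J]\to\mathbb{R}_{\ge0}$, the PiCCE loss is $$\widetilde{\ell}_\phi(\theta,y,m)=\phi(\theta,y)+\phi\Big(\theta,\ \operatorname{argmax}_{j\in[m=y]}\theta_{j+K}+K\Big),\quad \theta\in\mathbb{R}^{K+J},$$ where the second term is defined to be $0$ when $[m=y]=\emptyset$. Write $\boldsymbol{\phi}(\theta)=(\phi(\theta,1),\dots,\phi(\theta,K+J))^\top$. The loss $\phi$ is called symmetric with respect to its last $J$ inputs if $P\boldsymbol{\phi}(\theta)=\boldsymbol{\phi}(P\theta)$ for all $\theta\in\mathbb{R}^{K+J}$ and all $(K+J)\times(K+J)$ permutation matrices $P$ with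 $P_{i,i}=1$ for all $i\in[K]$ (i.e. permutations fixing the first $K$ coordinates). *)

From HB Require Import structures.
From mathcomp Require Import all_boot all_order all_algebra all_fingroup.
From mathcomp Require Import all_classical all_reals all_analysis.
Set Implicit Arguments. Unset Strict Implicit. Unset Printing Implicit Defensive.
Import Order.TTheory GRing.Theory Num.Theory.
Import numFieldNormedType.Exports.
Local Open Scope ring_scope.

(* Index i : 'I_(K+J); class y : 'I_K is output (lshift J y) (= y in [K]),
   expert j : 'I_J is output (rshift K j) (= j + K).  *)

Definition argmax_rule (R : realType) (J : nat)
  (sel : {set 'I_J} -> ('I_J -> R) -> 'I_J) : Prop :=
  forall (A : {set 'I_J}) (v : 'I_J -> R), A != finset.set0 ->
    sel A v \in A /\ (forall j, j \in A -> v j <= v (sel A v)).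

Definition bphi (R : realType) (n : nat) (phi : 'cV[R]_n -> 'I_n -> R)
  (theta : 'cV[R]_n) : 'cV[R]_n := \col_i phi theta i.

Definition sym_last (R : realType) (K J : nat)
  (phi : 'cV[R]_(K + J) -> 'I_(K + J) -> R) : Prop :=
  forall (P : 'M[R]_(K + J)), is_perm_mx P ->
    (forall i : 'I_K, P (lshift J i) (lshift J i) = 1) ->
    forall theta : 'cV[R]_(K + J), P *m bphi phi theta = bphi phi (P *m theta).

Definition agree_set (K J : nat) (y : 'I_K) (m : 'I_J -> 'I_K) : {set 'I_J} :=
  [set j | m j == y].

Definition picce (R : realType) (K J : nat)
  (sel : {set 'I_J} -> ('I_J -> R) -> 'I_J)
  (phi : 'cV[R]_(K + J) -> 'I_(K + J) -> R)
  (theta : 'cV[R]_(K + J)) (y : 'I_K) (m : 'I_J -> 'I_K) : R :=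
  phi theta (lshift J y) +
  (if agree_set y m == finset.set0 then 0
   else phi theta (rshift K (sel (agree_set y m) (fun j => theta (rshift K j) 0)))).

From HB Require Import structures.
From mathcomp Require Import all_boot all_order all_algebra all_fingroup.
From mathcomp Require Import all_classical all_reals all_analysis.
Import Order.TTheory GRing.Theory Num.Theory.
Import numFieldNormedType.Exports.
Local Open Scope ring_scope.

(* The selected expert sel A (v theta) jumps as theta varies, but near theta0 it
   is always one of the indices tied for the maximum of v at theta0.  Swapping two
   tied expert coordinates fixes theta, so by symmetry phi takes the same value at
   all of them, and composing the selection with the continuous phi removes the
   discontinuity. *)

Lemma sym_last_tie {R : realType} {K J : nat}
  {phi : 'cV[R]_(K + J) -> 'I_(K + J) -> R} (phi_sym : sym_last phi)
  (theta : 'cV[R]_(K + J)) (j j' : 'I_J) :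
  theta (rshift K j) 0 = theta (rshift K j') 0 ->
  phi theta (rshift K j) = phi theta (rshift K j').
Proof.
move=> tie; pose s : 'S_(K + J) := tperm (rshift K j) (rshift K j').
have s_fixK (i : 'I_K) : s (lshift J i) = lshift J i.
  by rewrite tpermD // eq_sym eq_lrshift.
have P_fixK (i : 'I_K) : perm_mx (R := R) s (lshift J i) (lshift J i) = 1.
  by rewrite !mxE s_fixK eqxx.
have s_theta : row_perm s theta = theta.
  by apply/matrixP => i k; rewrite mxE ord1 /s; case: tpermP => // ->.
have := phi_sym _ (perm_mx_is_perm R s) P_fixK theta.
rewrite -!row_permE s_theta => /(congr1 (fun M : 'cV[R]_(K + J) => M (rshift K j) 0)).
by rewrite !mxE tpermL.
Qed.

Section ArgmaxContinuity.
Context {T : topologicalType} {R : realType} {J : nat}.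
Context {sel : {set 'I_J} -> ('I_J -> R) -> 'I_J} {A : {set 'I_J}}.
Hypotheses (hsel : argmax_rule sel) (A_neq0 : A != finset.set0).
Context {v : T -> 'I_J -> R}.
Hypothesis v_cont : forall j, continuous (v ^~ j).

Lemma near_argmax_tied (t0 : T) :
  \forall t \near t0, v t0 (sel A (v t)) = v t0 (sel A (v t0)).
Proof.
set j0 := sel A (v t0); have [j0A j0_max] := hsel A (v t0) A_neq0.
have strict_near : \forall t \near t0,
    forall j, v t0 j < v t0 j0 -> v t j < v t j0.
  apply: filter_forall => j.
  have [lt_j_j0|_] := ltP (v t0 j) (v t0 j0); last by apply: nearW.
  have gap_pos : 0 < v t0 j0 - v t0 j by rewrite subr_gt0.
  apply: filterS (cvgr_gt _ (cvgB (v_cont j0 t0) (v_cont j t0)) _ gap_pos).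
  by move=> t; rewrite subr_gt0.
apply: filterS strict_near => t strict_t.
have [sA s_max] := hsel A (v t) A_neq0.
apply/le_anti; rewrite j0_max //= leNgt; apply/negP => /strict_t.
by rewrite ltNge s_max.
Qed.

Lemma continuous_comp_argmax (g : T -> 'I_J -> R) :
  (forall j, continuous (g ^~ j)) ->
  (forall t j j', v t j = v t j' -> g t j = g t j') ->
  continuous (fun t => g t (sel A (v t))).
Proof.
move=> g_cont g_tie t0; apply/cvgrPdist_lt => e e_gt0.
set j0 := sel A (v t0).
have tied_close : \forall t \near t0,
    forall j, v t0 j = v t0 j0 -> `|g t0 j0 - g t j| < e.
  apply: filter_forall => j.
  have [tie|untied] := eqVneq (v t0 j) (v t0 j0); last first.
    by apply: nearW => t /eqP; rewrite (negbTE untied).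
  rewrite -(g_tie _ _ _ tie).
  by apply: filterS (cvgr_dist_lt _ _ (g_cont j t0) _ e_gt0) => t.
apply: filterS2 tied_close (near_argmax_tied t0) => t close_t tied_t.
exact: close_t.
Qed.

End ArgmaxContinuity.

Theorem theorem1 (R : realType) (K J : nat) (hK : (2 <= K)%N) (hJ : (1 <= J)%N)
  (sel : {set 'I_J} -> ('I_J -> R) -> 'I_J) (hsel : argmax_rule sel)
  (phi : 'cV[R]_(K + J) -> 'I_(K + J) -> R)
  (phi_ge0 : forall theta i, 0 <= phi theta i)
  (phi_cont : forall i, continuous (fun theta => phi theta i))
  (phi_sym : sym_last phi) :
  forall (y : 'I_K) (m : 'I_J -> 'I_K),
    continuous (fun theta => picce sel phi theta y m).
Proof.
move=> y m theta0; rewrite /picce; apply: (cvgD (phi_cont _ theta0)).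
case: eqP => [_|/eqP A_neq0]; first exact: cvg_cst.
have coord_cont j : continuous (fun t : 'cV[R]_(K + J) => t (rshift K j) 0).
  by move=> t; exact: coord_continuous.
have expert_cont := continuous_comp_argmax hsel A_neq0 coord_cont
  (fun t j => phi t (rshift K j)) (fun j => phi_cont (rshift K j)) (sym_last_tie phi_sym).
exact: expert_cont.
Qed.
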